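(* Every topological space $X$ is $\Gamma$-embedded in its cone $\mathrm{Cone}(X)=([0,1]\times X)/(\{0\}\times X)$ (quotient topology); namely via the embedding $c\colon X\to\mathrm{Cone}(X)$, $x\mapsto 1x$, and the semigroup homomorphism $\sigma\colon\Gamma(X)\to\Gamma(\mathrm{Cone}(X))$ sending $f$ to $\sigma(f)\colon \eta((0,1]\times\mathrm{dom}(f))\to\eta((0,1]\times\mathrm{im}(f))$, $tx\mapsto tf(x)$.
   Context: $\eta\colon[0,1]\times X\to\mathrm{Cone}(X)$ is the quotient map and $tx=\eta(t,x)$. For a topological space $X$, $\Gamma(X)$ is the inverse monoid of homeomorphisms between open subsets of $X$ (including the empty map), with product $\psi\circ\phi\colon \phi^{-1}(\mathrm{dom}(\psi)\cap\mathrm{im}(\phi))\to\psi(\mathrm{dom}(\psi)\cap\mathrm{im}(\phi))$. Let $\Gamma(X)*X=\{(f,x)\in\Gamma(X)\times X: x\in\mathrm{dom}(f)\}$. $X$ is $\Gamma$-embedded in a space $Z$ if there exist a semigroup homomorphism $\sigma\colon\Gamma(X)\to\Gamma(Z)$ and a topological embedding $c\colon X\to Z$ such that for every $(f,x)\in\Gamma(X)*X$ one has $c(x)\in\mathrm{dom}(\sigma(f))$ and $\sigma(f)(c(x))=c(f(x))$. *)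

From HB Require Import structures.
From mathcomp Require Import all_boot all_order all_algebra.
From mathcomp Require Import all_classical all_reals all_analysis.
Set Implicit Arguments. Unset Strict Implicit. Unset Printing Implicit Defensive.
Import Order.TTheory GRing.Theory Num.Theory.
Import numFieldNormedType.Exports.
Local Open Scope classical_set_scope.
Local Open Scope ring_scope.

(* The product of Gamma(X) is composition of
   partial maps: (psi o phi)(x) = psi(phi(x)), defined exactly on
   phi^{-1}(dom psi /\ im phi). *)

Definition pdom {X : Type} (f : X -> option X) : set X := [set x | f x <> None].
Definition pfun {X : Type} (f : X -> option X) : X -> X := fun x => odflt x (f x).
Definition pcomp {X : Type} (g f : X -> option X) : X -> option X :=
  fun x => obind g (f x).

Definition is_phomeo {X : topologicalType} (f : X -> option X) : Prop :=
  exists g : X -> option X,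
    [/\ open (pdom f), open (pdom g),
        (forall x y, f x = Some y <-> g y = Some x),
        {within pdom f, continuous (pfun f)} &
        {within pdom g, continuous (pfun g)}].

Definition top_embedding {X Z : topologicalType} (c : X -> Z) : Prop :=
  [/\ injective c, continuous c &
      forall U : set X, open U -> exists V : set Z, open V /\ c @` U = V `&` range c].

(* X is Gamma-embedded in Z via sigma and c.  sigma is given as a map on
   partial maps, required to send Gamma(X) into Gamma(Z) and to be
   multiplicative on Gamma(X); i.e. its restriction is a semigroup
   homomorphism Gamma(X) -> Gamma(Z). *)
Definition Gamma_embedding_via {X Z : topologicalType}
  (sigma : (X -> option X) -> (Z -> option Z)) (c : X -> Z) : Prop :=
  [/\ top_embedding c,
      (forall f, is_phomeo f -> is_phomeo (sigma f)),
      (forall f g, is_phomeo f -> is_phomeo g ->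
         sigma (pcomp g f) = pcomp (sigma g) (sigma f)) &
      (forall f x y, is_phomeo f -> f x = Some y -> sigma f (c x) = Some (c y))].

Definition Gamma_embedded (X Z : topologicalType) : Prop :=
  exists sigma c, @Gamma_embedding_via X Z sigma c.

Section Cone.
Variables (R : realType) (X : topologicalType).

Local Notation unitI := (set_type (`[0, 1] : set R)).

(* Carrier of Cone(X) = ([0,1] x X)/({0} x X): the apex (None), or a class
   t x with 0 < t <= 1 (which is a singleton class). *)
Definition cone_car : Type := option (set_type (`]0, 1] : set R) * X).

Definition cone_eta (p : unitI * X) : cone_car :=
  omap (fun s => (s, p.2)) (insub (set_val p.1) : option (set_type (`]0, 1] : set R))).

Definition cone : Type := cone_car.
HB.instance Definition _ := Choice.on cone.

Definition cone_open (U : set cone) : Prop := open (cone_eta @^-1` U).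

Lemma cone_openT : cone_open setT.
Proof. by rewrite /cone_open preimage_setT; exact: openT. Qed.

Lemma cone_openI : setI_closed cone_open.
Proof. by move=> A B oA oB; rewrite /cone_open preimage_setI; exact: openI. Qed.

Lemma cone_open_bigU (I : Type) (f : I -> set cone) :
  (forall i, cone_open (f i)) -> cone_open (\bigcup_i f i).
Proof.
move=> H; rewrite /cone_open preimage_bigcup.
by apply: bigcup_open => i _; exact: H.
Qed.

HB.instance Definition _ :=
  isOpenTopological.Build cone cone_openT cone_openI cone_open_bigU.

Lemma one_in_unitI : (1 : R) \in (`[0, 1]%classic : set R).
Proof. by apply/mem_set; rewrite /= in_itv /= ler01 lexx. Qed.

Definition oneI : unitI := exist _ 1 one_in_unitI.

Definition cone_c (x : X) : cone := cone_eta (oneI, x).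

Definition cone_sigma (f : X -> option X) : cone -> option cone :=
  fun z => match z with
           | None => None
           | Some (s, x) => omap (fun y => Some (s, y) : cone) (f x)
           end.

End Cone.

From mathcomp Require Import all_boot all_order all_algebra.
From mathcomp Require Import all_classical all_reals all_analysis.
Set Implicit Arguments. Unset Strict Implicit. Unset Printing Implicit Defensive.
Import Order.TTheory GRing.Theory Num.Theory.
Import numFieldNormedType.Exports.
Local Open Scope classical_set_scope.
Local Open Scope ring_scope.

(* The cone construction is functorial on the second coordinate: a map phi
   continuous on an open set D induces tx |-> t phi(x), continuous on the open
   set eta((0,1] x D), because its pullback along eta is the continuous map
   id x phi and the cone carries the quotient topology.  Applying this to a
   partial homeomorphism f and to its inverse shows that sigma(f) is again a
   partial homeomorphism; multiplicativity and compatibility with x |-> 1x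
   are pointwise computations on the classes tx with t > 0. *)

Section ConeMap.
Variables (R : realType) (X : topologicalType).
Local Notation unitI := (set_type (`[0, 1] : set R)).
Local Notation cone := (cone R X).
Local Notation eta := (@cone_eta R X).

Definition cone_map (phi : X -> X) (z : cone) : cone :=
  if z is Some (s, x) then Some (s, phi x) else None.

Definition cone_cyl (D : set X) : set cone :=
  fun z => if z is Some (_, x) then D x else False.

Lemma preimage_cone_eta_cyl (D : set X) :
  eta @^-1` cone_cyl D = [set p | 0 < set_val p.1 /\ D p.2].
Proof.
apply/seteqP; split => -[t x] /=.
- rewrite /cone_eta /=; case: insubP => //= -[s /set_mem /=] + _ <-.
  by rewrite in_itv /= => /andP[].
- case=> t_gt0 Dx; rewrite /cone_eta /=; case: insubP => //= /negP[].
  move: (set_valP t); rewrite /= in_itv /= => /andP[_ t_le1].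
  by apply/mem_set; rewrite /= in_itv /= t_gt0 t_le1.
Qed.

Lemma open_cone_cyl (D : set X) : open D -> open (cone_cyl D).
Proof.
move=> oD; change (open (eta @^-1` cone_cyl D)); rewrite preimage_cone_eta_cyl.
have fst_val : continuous (fun p : unitI * X => set_val p.1).
  by move=> p; apply: continuous_comp; [exact: cvg_fst|exact: initial_continuous].
apply: openI.
- exact: (proj1 (continuousP _) fst_val _ (@open_gt R 0)).
- have snd_cont : continuous (@snd unitI X) by move=> p; exact: cvg_snd.
  exact: (proj1 (continuousP _) snd_cont _ oD).
Qed.

Lemma cone_eta_map (phi : X -> X) (p : unitI * X) :
  eta (p.1, phi p.2) = cone_map phi (eta p).
Proof. by case: p => t x; rewrite /cone_eta /=; case: insub. Qed.

Lemma continuous_cone_eta : continuous (eta : unitI * X -> cone).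
Proof. exact/continuousP. Qed.

Lemma cone_map_continuous_in (phi : X -> X) (D : set X) :
  open D -> {in D, continuous phi} -> {in cone_cyl D, continuous (cone_map phi)}.
Proof.
move=> oD phiD; apply/(continuous_inP _ (open_cone_cyl oD)) => U oU.
have oU' : open (eta @^-1` U) := oU.
have ocyl : open (eta @^-1` cone_cyl D) := open_cone_cyl oD.
pose idphi (p : unitI * X) := (p.1, phi p.2).
change (open (eta @^-1` (cone_cyl D `&` cone_map phi @^-1` U))).
have -> : eta @^-1` (cone_cyl D `&` cone_map phi @^-1` U) =
    eta @^-1` cone_cyl D `&` idphi @^-1` (eta @^-1` U).
  by rewrite preimage_setI; congr (_ `&` _); apply/funext => p /=; rewrite cone_eta_map.
apply: (proj1 (continuous_inP idphi ocyl)) oU'.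
move=> p; rewrite inE preimage_cone_eta_cyl => -[_ Dp].
apply: (@cvg_pair _ _ _ _ (nbhs p.1) (nbhs (phi p.2))); first exact: cvg_fst.
apply: (@continuous_comp _ _ _ snd phi); first exact: cvg_snd.
by apply: phiD; rewrite inE.
Qed.

End ConeMap.

Section ConeSigma.
Variables (R : realType) (X : topologicalType).
Local Notation cone := (cone R X).
Local Notation sigma := (@cone_sigma R X).

Lemma pfun_cone_sigma (f : X -> option X) : pfun (sigma f) = cone_map (pfun f).
Proof. by apply/funext => -[[s x]|] //; rewrite /pfun /=; case: (f x). Qed.

Lemma pdom_cone_sigma (f : X -> option X) : pdom (sigma f) = cone_cyl (pdom f).
Proof. by apply/seteqP; split => -[[s x]|] //; rewrite /pdom /=; case: (f x). Qed.

Lemma cone_sigma_pcomp (f g : X -> option X) :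
  sigma (pcomp g f) = pcomp (sigma g) (sigma f).
Proof. by apply/funext => -[[t x]|] //; rewrite /pcomp /=; case: (f x). Qed.

Lemma cone_sigma_inv (f g : X -> option X) :
  (forall x y, f x = Some y -> g y = Some x) ->
  forall z w, sigma f z = Some w -> sigma g w = Some z.
Proof.
move=> fg [[s x]|] //= w; case fx: (f x) => [y|] //= [<-] /=.
by rewrite (fg _ _ fx).
Qed.

Lemma continuous_cone_sigma (f : X -> option X) :
  open (pdom f) -> {within pdom f, continuous (pfun f)} ->
  {within pdom (sigma f), continuous (pfun (sigma f))}.
Proof.
move=> odom cf; rewrite pdom_cone_sigma pfun_cone_sigma.
rewrite continuous_open_subspace; last exact: open_cone_cyl.
by apply: cone_map_continuous_in => //; rewrite -continuous_open_subspace.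
Qed.

Lemma is_phomeo_cone_sigma (f : X -> option X) : is_phomeo f -> is_phomeo (sigma f).
Proof.
case=> g [odf odg fg cf cg]; exists (sigma g); split.
- by rewrite pdom_cone_sigma; exact: open_cone_cyl.
- by rewrite pdom_cone_sigma; exact: open_cone_cyl.
- by move=> z w; split; apply: cone_sigma_inv => x y /fg.
- exact: continuous_cone_sigma.
- exact: continuous_cone_sigma.
Qed.

Lemma one_in_oc01 : (1 : R) \in (`]0, 1]%classic : set R).
Proof. by apply/mem_set; rewrite /= in_itv /= ltr01 lexx. Qed.

Definition one_oc01 : set_type (`]0, 1] : set R) := exist _ 1 one_in_oc01.

Lemma cone_cE (x : X) : @cone_c R X x = Some (one_oc01, x).
Proof.
rewrite /cone_c /cone_eta /=; case: insubP => [s _ s1|/negP[]]; last exact: one_in_oc01.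
by congr (Some (_, _)); apply: val_inj.
Qed.

Lemma cone_sigma_c (f : X -> option X) (x y : X) :
  f x = Some y -> sigma f (cone_c R x) = Some (cone_c R y).
Proof. by move=> fx; rewrite !cone_cE /= fx. Qed.

Lemma top_embedding_cone_c : top_embedding (@cone_c R X).
Proof.
split.
- by move=> x y; rewrite !cone_cE => -[].
- have -> : @cone_c R X = @cone_eta R X \o pair (oneI R) by [].
  move=> x; apply: (continuous_comp _ (@continuous_cone_eta R X _)).
  by apply: (@cvg_pair _ _ _ _ (nbhs (oneI R)) (nbhs x)); [exact: cvg_cst|exact: cvg_id].
- move=> U oU; exists (cone_cyl U); split; first exact: open_cone_cyl.
  apply/seteqP; split => z.
  + by case=> x Ux <-; split; [rewrite cone_cE | exists x].
  + by case=> Uz [x _ xz]; subst z; exists x => //; move: Uz; rewrite cone_cE.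
Qed.

End ConeSigma.

Theorem proposition2p7 (R : realType) (X : topologicalType) :
  @Gamma_embedding_via X (cone R X) (@cone_sigma R X) (@cone_c R X).
Proof.
split.
- exact: top_embedding_cone_c.
- exact: is_phomeo_cone_sigma.
- by move=> f g _ _; exact: cone_sigma_pcomp.
- by move=> f x y _; exact: cone_sigma_c.
Qed.
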